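(* Let $(X,S)$ be an association scheme with the trivial partition $S=\{\mathbf{1},\sigma\}$, where $\mathbf{1}=\{(x,x)\mid x\in X\}$ and $\sigma=(X\times X)\setminus\mathbf{1}$. If $\sharp X\geq3$, then the group $h\mathrm{aut}(\jmath(X,S))$ is isomorphic to the symmetric group on $\sharp X$ letters. If $\sharp X=2$, then $h\mathrm{aut}(\jmath(X,S))$ is trivial.
   Context: An association scheme is a pair $(X,S)$ with $X$ a finite set and $S$ a partition of $X\times X$ containing $\{(x,x)\mid x\in X\}$, closed under $g\mapsto g^*=\{(y,x)\mid(x,y)\in g\}$, such that for all $e,f,g\in S$ the number $\sharp\{y\in X\mid(x,y)\in e,(y,z)\in f\}$ is the same for all $(x,z)\in g$. The quasi-schemoid $\jmath(X,S)=(\mathcal{C},S)$ has $ob(\mathcal{C})=X$, $\mathrm{Hom}_{\mathcal{C}}(y,x)=\{(x,y)\}$, composition $(z,x)\circ(x,y)=(z,y)$, and partition $S$ of $mor(\mathcal{C})=X\times X$. A morphism of quasi-schemoids is a functor sending each block of the source partition into some block of the target partition. Product: $(\mathcal{C},S)\times(\mathcal{E},S')=(\mathcal{C}\times\mathcal{E},\{\sigma\times\tau\})$. $[1]$ has objects $0,1$ and one non-identity morphism $0\to1$; $I=([1],\{\{f\}\}_{f})$. A homotopy $H\colon F\Rightarrow G$ is a morphism $H\colon(\mathcal{C},S)\times I\to(\mathcal{D},S')$ with $H\circ\varepsilon_0=F$, $H\circ\varepsilon_1=G$ ($\varepsilon_i(a)=(a,i)$, $\varepsilon_i(f)=(f,1_i)$).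 $F\sim G$ means there is a homotopy $F\Rightarrow G$ or $G\Rightarrow F$; $F\simeq G$ means a finite chain $F=F_0\sim\cdots\sim F_n=G$; $\simeq$ is an equivalence relation compatible with composition. A self-homotopy equivalence of $A$ is a morphism $F\colon A\to A$ for which there is $G\colon A\to A$ with $FG\simeq1$ and $GF\simeq1$; $h\mathrm{aut}(A)$ is the group of $\simeq$-classes of self-homotopy equivalences of $A$ under composition. *)

From HB Require Import structures.
From mathcomp Require Import all_boot.
From Stdlib Require Import Relations.
Set Implicit Arguments. Unset Strict Implicit. Unset Printing Implicit Defensive.

Section Scheme.
Variable X : finType.

Definition diagX : {set X * X} := [set p | p.1 == p.2].
Definition transp (g : {set X * X}) : {set X * X} := [set p | (p.2, p.1) \in g].

Definition is_assoc_scheme (S : {set {set X * X}}) : Prop :=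
  [/\ partition S [set: X * X],
      diagX \in S,
      (forall g, g \in S -> transp g \in S) &
      (forall e f g, e \in S -> f \in S -> g \in S ->
         forall p q, p \in g -> q \in g ->
           #|[set y | ((p.1, y) \in e) && ((y, p.2) \in f)]| =
           #|[set y | ((q.1, y) \in e) && ((y, q.2) \in f)]|)].
End Scheme.

(* comp f g is "f o g", meaningful when dom f = cod g.                 *)
Record category := Category {
  ob : Type;
  mor : Type;
  dom : mor -> ob;
  cod : mor -> ob;
  idm : ob -> mor;
  comp : mor -> mor -> mor;
  dom_id : forall a, dom (idm a) = a;
  cod_id : forall a, cod (idm a) = a;
  dom_comp : forall f g, dom f = cod g -> dom (comp f g) = dom g;
  cod_comp : forall f g, dom f = cod g -> cod (comp f g) = cod f;
  comp_id_r : forall f, comp f (idm (dom f)) = f;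
  comp_id_l : forall f, comp (idm (cod f)) f = f;
  comp_assoc : forall f g h, dom f = cod g -> dom g = cod h ->
                 comp f (comp g h) = comp (comp f g) h
}.

Record functor (C D : category) := Functor {
  fo : ob C -> ob D;
  fm : mor C -> mor D;
  f_dom : forall m, dom (fm m) = fo (dom m);
  f_cod : forall m, cod (fm m) = fo (cod m);
  f_id : forall a, fm (idm a) = idm (fo a);
  f_comp : forall f g, dom f = cod g -> fm (comp f g) = comp (fm f) (fm g)
}.

Definition functor_id (C : category) : functor C C.
Proof.
refine (@Functor C C id id _ _ _ _); by [].
Defined.

Definition functor_comp (C D E : category) (G : functor D E) (F : functor C D) :
  functor C E.
Proof.
refine (@Functor C E (fun a => fo G (fo F a)) (fun m => fm G (fm F m)) _ _ _ _).
- by move=> m; rewrite f_dom f_dom.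
- by move=> m; rewrite f_cod f_cod.
- by move=> a; rewrite f_id f_id.
- move=> f g H; rewrite f_comp // f_comp //.
  by rewrite f_dom f_cod H.
Defined.

Definition functor_eq (C D : category) (F G : functor C D) : Prop :=
  (forall a, fo F a = fo G a) /\ (forall m, fm F m = fm G m).

Definition prod_cat (C E : category) : category.
Proof.
refine (@Category (ob C * ob E) (mor C * mor E)
   (fun m => (dom m.1, dom m.2)) (fun m => (cod m.1, cod m.2))
   (fun a => (idm a.1, idm a.2))
   (fun f g => (comp f.1 g.1, comp f.2 g.2)) _ _ _ _ _ _ _).
- by move=> [a b] /=; rewrite !dom_id.
- by move=> [a b] /=; rewrite !cod_id.
- by move=> [f1 f2] [g1 g2] /= [H1 H2]; rewrite !dom_comp.
- by move=> [f1 f2] [g1 g2] /= [H1 H2]; rewrite !cod_comp.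
- by move=> [f1 f2] /=; rewrite !comp_id_r.
- by move=> [f1 f2] /=; rewrite !comp_id_l.
- by move=> [f1 f2] [g1 g2] [h1 h2] /= [H1 H2] [K1 K2]; rewrite !comp_assoc.
Defined.

(* the category [1] : objects 0 (false), 1 (true), one arrow 0 -> 1 *)
Inductive mor1 := Id0 | Id1 | Arr01.

Definition dom1 (m : mor1) : bool := match m with Id0 => false | Id1 => true | Arr01 => false end.
Definition cod1 (m : mor1) : bool := match m with Id0 => false | Id1 => true | Arr01 => true end.
Definition id1 (b : bool) : mor1 := if b then Id1 else Id0.
Definition comp1 (f g : mor1) : mor1 :=
  match f with Id0 => g | Id1 => g | Arr01 => Arr01 end.

Definition cat1 : category.
Proof.
refine (@Category bool mor1 dom1 cod1 id1 comp1 _ _ _ _ _ _ _).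
- by case.
- by case.
- by case; case.
- by case; case.
- by case.
- by case.
- by case; case; case.
Defined.

(* indiscrete category on X: Hom(y,x) = {(x,y)}, (z,x) o (x,y) = (z,y) *)
Definition indisc_cat (X : Type) : category.
Proof.
refine (@Category X (X * X) (fun m => m.2) (fun m => m.1) (fun x => (x, x))
   (fun f g => (f.1, g.2)) _ _ _ _ _ _ _); try by [].
- by move=> [a b].
- by move=> [a b].
Defined.

(* Quasi-schemoids: a category together with a partition of its        *)
(* morphisms, given by the relation "lie in the same block".           *)
Record qschemoid := QSchemoid {
  qcat :> category;
  sameblk : mor qcat -> mor qcat -> Prop
}.

Record qmor (A B : qschemoid) := QMor {
  qfun :> functor A B;
  qfun_blk : forall m m', sameblk m m' -> sameblk (fm qfun m) (fm qfun m')
}.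

Definition qmor_id (A : qschemoid) : qmor A A.
Proof. by refine (@QMor A A (functor_id A) _). Defined.

Definition qmor_comp (A B C : qschemoid) (G : qmor B C) (F : qmor A B) : qmor A C.
Proof.
refine (@QMor A C (functor_comp G F) _).
by move=> m m' H /=; apply: qfun_blk; apply: qfun_blk.
Defined.

Definition qprod (A B : qschemoid) : qschemoid :=
  @QSchemoid (prod_cat A B)
    (fun m m' => sameblk (m.1 : mor A) m'.1 /\ sameblk (m.2 : mor B) m'.2).

Definition qI : qschemoid := @QSchemoid cat1 (fun m m' => m = m').

Definition jqs (X : finType) (S : {set {set X * X}}) : qschemoid :=
  @QSchemoid (indisc_cat X)
    (fun m m' => exists2 B, B \in S & (m \in B) && (m' \in B)).

Definition eps (C : category) (i : bool) : functor C (prod_cat C cat1).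
Proof.
refine (@Functor C (prod_cat C cat1) (fun a => (a, i)) (fun f => (f, id1 i)) _ _ _ _).
- by move=> m /=; case: i.
- by move=> m /=; case: i.
- by [].
- by move=> f g H /=; case: i.
Defined.

Definition homotopy (A B : qschemoid) (F G : qmor A B) (H : qmor (qprod A qI) B) : Prop :=
  functor_eq (functor_comp H (eps A false)) F /\
  functor_eq (functor_comp H (eps A true)) G.

Definition homotopic (A B : qschemoid) (F G : qmor A B) : Prop :=
  exists H, homotopy F G H.

Definition hsim (A B : qschemoid) (F G : qmor A B) : Prop :=
  homotopic F G \/ homotopic G F.

Definition hequiv (A B : qschemoid) : relation (qmor A B) :=
  clos_refl_trans (qmor A B) (@hsim A B).

Definition self_heq (A : qschemoid) (F : qmor A A) : Prop :=
  exists G : qmor A A,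
    hequiv (qmor_comp F G) (qmor_id A) /\ hequiv (qmor_comp G F) (qmor_id A).

From mathcomp Require Import all_boot fingroup perm.
From Stdlib Require Import Relations.
Set Implicit Arguments. Unset Strict Implicit. Unset Printing Implicit Defensive.

(* A morphism of j(X,S) is determined by its map on objects f, and a homotopy
   F => G by the maps G, F on the two ends of the arrows (a,b) x (0 -> 1).
   For the trivial scheme, f defines a morphism iff [f a = f b] depends only
   on whether [a = b], i.e. f is injective or constant; likewise F => G
   exists iff [G a = F b] depends only on whether [a = b].  When #X >= 3 and
   F is injective this forces G = F, so homotopy classes of self-equivalences
   are just permutations.  When #X = 2 the constant maps form a closed class,
   while the identity and the transposition are homotopic. *)

Lemma fm_indiscE (C : category) (X : Type) (F : functor C (indisc_cat X)) (m : mor C) :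
  fm F m = (fo F (cod m), fo F (dom m)).
Proof. by rewrite -f_cod -f_dom; case: (fm F m). Qed.

Definition indisc_functor (C : category) (X : Type) (f : ob C -> X) :
  functor C (indisc_cat X).
Proof.
refine (@Functor C (indisc_cat X) f (fun m => (f (cod m), f (dom m))) _ _ _ _) => //=.
- by move=> a; rewrite dom_id cod_id.
- by move=> g h E; rewrite cod_comp // dom_comp.
Defined.

Section DiagInvariant.
Variable X : finType.

Definition diag_invariant (g f : X -> X) :=
  forall a b a' b', (a == b) = (a' == b') -> (g a == f b) = (g a' == f b').

Lemma diag_invariantC g f : diag_invariant g f -> diag_invariant f g.
Proof.
move=> P a b a' b' E.
by rewrite eq_sym [f a' == _]eq_sym; apply: P; rewrite eq_sym [b' == _]eq_sym.
Qed.

Lemma injective_diag_invariant f : injective f -> diag_invariant f f.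
Proof. by move=> finj a b a' b'; rewrite !(inj_eq finj). Qed.

Lemma diag_invariant_injective_or_const f :
  diag_invariant f f -> injective f \/ forall a b, f a = f b.
Proof.
move=> P; have [/injectiveP|/injectivePn[a [b ab fab]]] := boolP (injectiveb f).
  by left.
right=> a' b'; have [-> //|ab'] := eqVneq a' b'.
by apply/eqP; rewrite -(P a b) ?fab ?eqxx // (negPf ab) (negPf ab').
Qed.

Lemma diag_invariant_rigid g f :
  2 < #|X| -> injective f -> diag_invariant g f -> g =1 f.
Proof.
move=> /card_gt2P[x [y [z [_ [xy yz zx]]]]] finj P.
have offdiag a b : a != b -> g a != f b.
  move=> ab; rewrite (P a b x y) ?(negPf ab) ?(negPf xy) //.
  apply/eqP=> gxfy; have := P x z x y.
  rewrite (negPf xy) eq_sym (negPf zx) gxfy eqxx (inj_eq finj) => /(_ erefl).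
  by rewrite (negPf yz).
move=> a; have [f' _ f'K] := injF_bij finj.
have [ea|ne] := eqVneq a (f' (g a)); first by rewrite {2}ea f'K.
by move: (offdiag _ _ ne); rewrite f'K eqxx.
Qed.

Section TwoPoints.
Hypothesis X2 : #|X| = 2.

Lemma card2_other (x y z : X) : x != y -> z != x -> z = y.
Proof.
move=> xy zx; apply/eqP/negPn/negP => zy.
suff : 2 < #|X| by rewrite X2.
by apply/card_gt2P; exists x, y, z; split=> //; rewrite xy zx eq_sym zy.
Qed.

Lemma diag_invariant_const g f :
  diag_invariant g f -> (forall a b, f a = f b) -> forall a b, g a = g b.
Proof.
move=> P fc.
have /card_gt1P[u [v [_ _ uv]]] : 1 < #|X| by rewrite X2.
have E := P u v v u (eq_sym u v); rewrite (fc v u) in E.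
have guv : g u = g v.
  have [gu|gu] := eqVneq (g u) (f u).
    by move: E; rewrite gu eqxx => /esym/eqP ->.
  move: E; rewrite (negPf gu) => /esym/negbT gv.
  by apply/esym/(card2_other _ gv); rewrite eq_sym.
have gE a : g a = g u.
  by have [-> //|au] := eqVneq a u; rewrite (card2_other uv au) guv.
by move=> a b; rewrite !gE.
Qed.

Lemma card2_injective_diag_invariant f : injective f -> diag_invariant id f.
Proof.
move=> finj; have [/forallP fid|/forallPn[x nx]] := boolP [forall x, f x == x].
  by move=> a b a' b' E /=; rewrite !(eqP (fid _)).
have nfix b : f b != b.
  apply/eqP=> fb; have bx : b != x by apply: contraNneq nx => <-; rewrite fb.
  have bE : b = f x by apply: card2_other bx; rewrite eq_sym.
  by move: bx; rewrite -(finj b x) ?eqxx // -bE fb.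
have fE a b : (a == f b) = (a != b).
  have [-> |ab] := eqVneq a b; first by rewrite eq_sym (negPf (nfix b)).
  by rewrite (card2_other (_ : b != f b) ab) ?eqxx // eq_sym.
by move=> a b a' b' E /=; rewrite !fE E.
Qed.

End TwoPoints.
End DiagInvariant.

Section TrivialScheme.
Variables (X : finType) (S : {set {set X * X}}).
Hypothesis htriv : S = [set diagX X; ~: diagX X].

Lemma sameblk_jqs (m m' : X * X) :
  @sameblk (jqs S) m m' <-> (m.1 == m.2) = (m'.1 == m'.2).
Proof.
rewrite /= htriv; split.
- case=> B /set2P[] -> /andP[]; rewrite !inE; first by move=> -> ->.
  by move=> /negPf -> /negPf ->.
- case E: (m.1 == m.2) => /esym E'; [exists (diagX X) | exists (~: diagX X)];
  by rewrite ?inE ?eqxx ?orbT ?E ?E'.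
Qed.

Definition jqs_qmor (A : qschemoid) (f : ob A -> X)
  (hf : forall m m', sameblk m m' ->
     (f (cod m) == f (dom m)) = (f (cod m') == f (dom m'))) : qmor A (jqs S).
Proof.
refine (@QMor A (jqs S) (indisc_functor f) _).
by move=> m m' /hf E; apply/sameblk_jqs.
Defined.

Definition jqs_endo (f : X -> X) (hf : diag_invariant f f) : qmor (jqs S) (jqs S) :=
  @jqs_qmor (jqs S) f (fun m m' E => hf _ _ _ _ (proj1 (sameblk_jqs m m') E)).

Lemma qmor_diag_invariant (F : qmor (jqs S) (jqs S)) : diag_invariant (fo F) (fo F).
Proof.
move=> a b a' b' E.
have /sameblk_jqs := qfun_blk F (proj2 (sameblk_jqs (a, b) (a', b')) E).
by rewrite !fm_indiscE.
Qed.

Lemma homotopicP (F G : qmor (jqs S) (jqs S)) :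
  homotopic F G <-> diag_invariant (fo G) (fo F).
Proof.
split.
- case=> H [[F0 _] [G1 _]] a b a' b' E.
  have sb : @sameblk (qprod (jqs S) qI) ((a, b), Arr01) ((a', b'), Arr01).
    by split=> //; apply/sameblk_jqs.
  by move: (qfun_blk H sb) => /sameblk_jqs; rewrite !fm_indiscE /= -!F0 -!G1.
- move=> P; pose h (p : X * bool) := if p.2 then fo G p.1 else fo F p.1.
  have hb (m m' : mor (qprod (jqs S) qI)) : sameblk m m' ->
      (h (cod m) == h (dom m)) = (h (cod m') == h (dom m')).
    case: m m' => [m t] [m' t'] /= [/sameblk_jqs E <-].
    by case: t; rewrite /h /=; [apply: qmor_diag_invariant..| apply: P].
  exists (jqs_qmor hb); split; split=> //= m; rewrite fm_indiscE //.
Qed.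

Lemma hequiv_eqfun (F G : qmor (jqs S) (jqs S)) : fo F =1 fo G -> hequiv F G.
Proof.
move=> FG; apply: rt_step; left; apply/homotopicP => a b a' b' E.
by rewrite -!FG; apply: qmor_diag_invariant.
Qed.

Lemma hequiv_fo_invariant (P : (X -> X) -> Prop) :
    (forall f g, diag_invariant g f -> P f -> P g) ->
  forall F G : qmor (jqs S) (jqs S), hequiv F G -> P (fo F) <-> P (fo G).
Proof.
move=> Pstep F G; elim=> [F1 G1 FG1|//|F1 G1 K1 _ IH1 _ IH2]; last first.
  exact: iff_trans IH1 IH2.
have {FG1} GF1 : diag_invariant (fo G1) (fo F1).
  by case: FG1 => /homotopicP //; apply: diag_invariantC.
by split; apply: Pstep => //; apply: diag_invariantC.
Qed.

Lemma hequiv_rigid (f0 : X -> X) (F G : qmor (jqs S) (jqs S)) :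
  2 < #|X| -> injective f0 -> hequiv F G -> fo F =1 f0 <-> fo G =1 f0.
Proof.
move=> X3 inj0; apply: (hequiv_fo_invariant (P := fun g => g =1 f0)) => f g P f0E.
have finj : injective f by apply: eq_inj inj0 _ => x; rewrite f0E.
by move=> a; rewrite (diag_invariant_rigid X3 finj P).
Qed.

Lemma hequiv_const (F G : qmor (jqs S) (jqs S)) : #|X| = 2 -> hequiv F G ->
  (forall a b, fo F a = fo F b) <-> (forall a b, fo G a = fo G b).
Proof.
move=> X2; apply: (hequiv_fo_invariant (P := fun g => forall a b, g a = g b)).
by move=> f g; apply: diag_invariant_const.
Qed.

End TrivialScheme.

Theorem theorem4p4 (X : finType) (S : {set {set X * X}})
  (hS : is_assoc_scheme S) (htriv : S = [set diagX X; ~: diagX X]) :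
  (3 <= #|X| ->
     exists Phi : {perm X} -> qmor (jqs S) (jqs S),
       [/\ forall p, self_heq (Phi p),
           forall p q, hequiv (Phi (p * q)%g) (qmor_comp (Phi p) (Phi q)),
           forall p q, hequiv (Phi p) (Phi q) -> p = q &
           forall F, self_heq F -> exists p, hequiv F (Phi p)]) /\
  (#|X| = 2 -> forall F, self_heq F -> hequiv F (qmor_id (jqs S))).
Proof.
split=> [X3 | X2 F [G [_ GF]]].
  pose Phi (p : {perm X}) := jqs_endo htriv (injective_diag_invariant (@perm_inj _ p^-1%g)).
  exists Phi; split.
  - move=> p; exists (Phi p^-1%g).
    by split; apply: (hequiv_eqfun htriv) => x /=; rewrite ?invgK ?permK ?permKV.
  - by move=> p q; apply: (hequiv_eqfun htriv) => x /=; rewrite invMg permM.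
  - move=> p q /(hequiv_rigid htriv X3 (@perm_inj _ p^-1%g)) [/(_ (frefl _)) pq _].
    by apply: invg_inj; apply/permP => x; rewrite -pq.
  - move=> F [G [_ GF]].
    have [_ /(_ (frefl _)) GFid] := hequiv_rigid htriv X3 (@inj_id X) GF.
    have finj : injective (fo F) by apply: (can_inj (g := fo G)).
    exists (perm finj)^-1%g; apply: (hequiv_eqfun htriv) => x /=.
    by rewrite invgK permE.
have finj : injective (fo F).
  have [//|Fconst] := diag_invariant_injective_or_const (qmor_diag_invariant htriv F).
  have /card_gt1P[u [v [_ _ uv]]] : 1 < #|X| by rewrite X2.
  have [/(_ (fun a b => congr1 (fo G) (Fconst a b))) /= uvE _] := hequiv_const htriv X2 GF.
  by rewrite (uvE u v) eqxx in uv.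
apply: rt_step; left; apply/(homotopicP htriv).
exact: (card2_injective_diag_invariant X2 finj).
Qed.
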